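(* Let $p,q\ge0$ be integers and $\alpha=(\alpha_1,\dots,\alpha_p)$, $\beta=(\beta_1,\dots,\beta_q)$ real parameters, none of the $\beta_j$ equal to $0$, at least one of them a negative integer, and let $N$ be the largest absolute value of the negative integers among the $\alpha_i,\beta_j$. For $0\le n\le N$ put $c_n=\frac{(\alpha_1)_n\cdots(\alpha_p)_n}{(\beta_1)_n\cdots(\beta_q)_n\,n!}$ (assumed well defined, i.e. all denominators nonzero for $n\le N$), and fix complex numbers $s_n$ with $s_n^2=c_n$ (so $|s_n|^2=|c_n|$). Work in the $(N+1)$-dimensional Hilbert space with orthonormal basis $|0\rangle,\dots,|N\rangle$ and, for $w\in\mathbb{C}\setminus\{0\}$, define the truncated hypergeometric coherent state $|w;\alpha,\beta\rangle=\mathcal N(|w|)^{-1/2}\sum_{n=0}^{N}s_n w^n|n\rangle$, where $\mathcal N(|w|)=\sum_{n=0}^N|c_n|\,|w|^{2n}$ (which equals the truncated hypergeometric sum ${}_pF_q(\alpha,\beta;(-1)^\varsigma|w|^2)_N$, $\varsigma$ the number of negative parameters). Let $k\ge1$ be a divisor of $N+1$, $z\neq0$, and for $j=0,\dots,k-1$ let ${}_p^kF_q^j(|z|^2)_N=\sum_{n=0}^{(N+1)/k-1}|c_{nk+j}|\,|z|^{2(nk+j)}$, assumed nonzero, and define the truncated $k$-hypercat $$|z;\alpha,\beta;k,j\rangle={}_p^kF_q^j(|z|^2)_N^{-1/2}\sum_{n=0}^{(N+1)/k-1}s_{nk+j}\,z^{nk+j}\,|nk+j\rangle .$$ Then for each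 $j=0,1,\dots,k-1$, $$|z;\alpha,\beta;k,j\rangle=\frac1k\left(\frac{\mathcal N(|z|)}{{}_p^kF_q^j(|z|^2)_N}\right)^{1/2}\sum_{l=0}^{k-1}e^{-2\pi i jl/k}\,|ze^{2\pi i l/k};\alpha,\beta\rangle .$$
   Context: $(a)_n=a(a+1)\cdots(a+n-1)$, $(a)_0=1$, is the Pochhammer symbol. In the paper the coefficient $s_n$ is written as $1/\sqrt{{}_p\rho_q(n)}$ with ${}_p\rho_q(n)=n!\prod_j(\beta_j)_n/\prod_i(\alpha_i)_n$, and the normalizations use $|{}_p\rho_q(n)|$; any fixed choice of square root, used consistently on both sides, is meant. *)

From Stdlib Require Import Reals Arith Factorial.
From Coquelicot Require Import Coquelicot.
Open Scope R_scope.

Fixpoint poch (a : R) (n : nat) : R :=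
  match n with O => 1 | S m => poch a m * (a + INR m) end.

Fixpoint rprod (f : nat -> R) (m : nat) : R :=
  match m with O => 1 | S l => rprod f l * f l end.

Definition coef (p q : nat) (alpha beta : nat -> R) (n : nat) : R :=
  rprod (fun i => poch (alpha i) n) p /
  (rprod (fun j => poch (beta j) n) q * INR (fact n)).

Definition neg_int (x : R) : Prop := exists m : nat, (1 <= m)%nat /\ x = - INR m.

Fixpoint rsum (f : nat -> R) (m : nat) : R :=
  match m with O => 0 | S l => rsum f l + f l end.
Fixpoint csum (f : nat -> C) (m : nat) : C :=
  match m with O => RtoC 0 | S l => Cplus (csum f l) (f l) end.

(* Vectors of the (N+1)-dimensional Hilbert space: components w.r.t. the
   orthonormal basis |0>,...,|N>, as functions nat -> C (zero beyond N). *)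
Definition ket (m : nat) : nat -> C :=
  fun i => if Nat.eqb i m then RtoC 1 else RtoC 0.
Definition vscale (a : C) (v : nat -> C) : nat -> C := fun i => Cmult a (v i).
Definition vsum (f : nat -> nat -> C) (m : nat) : nat -> C :=
  fun i => csum (fun l => f l i) m.

Definition Nnorm (p q : nat) (alpha beta : nat -> R) (N : nat) (r : R) : R :=
  rsum (fun n => Rabs (coef p q alpha beta n) * r ^ (2 * n)%nat) (N + 1).

Definition hcs (p q : nat) (alpha beta : nat -> R) (N : nat) (s : nat -> C)
  (w : C) : nat -> C :=
  vscale (RtoC (/ sqrt (Nnorm p q alpha beta N (Cmod w))))
    (vsum (fun n => vscale (Cmult (s n) (Cpow w n)) (ket n)) (N + 1)%nat).

Definition Fkj (p q : nat) (alpha beta : nat -> R) (N k j : nat) (r : R) : R :=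
  rsum (fun n => Rabs (coef p q alpha beta ((n * k + j)%nat)) * r ^ (2 * (n * k + j))%nat)
    ((N + 1) / k)%nat.

Definition hypercat (p q : nat) (alpha beta : nat -> R) (N : nat) (s : nat -> C)
  (k j : nat) (z : C) : nat -> C :=
  vscale (RtoC (/ sqrt (Fkj p q alpha beta N k j (Cmod z))))
    (vsum (fun n => vscale (Cmult (s ((n * k + j)%nat)) (Cpow z ((n * k + j)%nat)))
                           (ket ((n * k + j)%nat))) ((N + 1) / k)%nat).

Definition cexpi (t : R) : C := (cos t, sin t).

From Stdlib Require Import Reals Lia Lra FunctionalExtensionality.
From Coquelicot Require Import Coquelicot.
Open Scope R_scope.

(* With [w = e^(2 pi i / k)], the discrete Fourier filter
   [(1/k) sum_l w^(-j l) w^(l n)] is [1] when [n = j mod k] and [0] otherwise.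
   Since [|z w^l| = |z|], every rotated coherent state [|z w^l>] carries the
   same normalization [N(|z|)], so the weighted sum of the [k] rotated states
   keeps exactly the components [|n k + j>] of [|z>], which is the hypercat up
   to the ratio of normalizations. *)

Lemma csum_ext f g m :
  (forall l, (l < m)%nat -> f l = g l) -> csum f m = csum g m.
Proof.
  induction m as [|m IH]; intros Hfg; simpl; [reflexivity|].
  rewrite IH by (intros; apply Hfg; lia). rewrite Hfg by lia. reflexivity.
Qed.

Lemma csum_mult_l a f m : csum (fun l => Cmult a (f l)) m = Cmult a (csum f m).
Proof.
  induction m as [|m IH]; simpl.
  - apply injective_projections; simpl; ring.
  - rewrite IH. ring.
Qed.

Lemma csum_const c m : csum (fun _ => c) m = Cmult (RtoC (INR m)) c.
Proof.
  induction m as [|m IH].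
  - apply injective_projections; simpl; ring.
  - cbn [csum]. rewrite IH, S_INR, RtoC_plus. ring.
Qed.

Lemma csum_geometric w m :
  Cmult (Cminus w (RtoC 1)) (csum (fun l => Cpow w l) m) = Cminus (Cpow w m) (RtoC 1).
Proof.
  induction m as [|m IH]; simpl; [ring|].
  rewrite Cmult_plus_distr_l, IH. ring.
Qed.

Lemma csum_pow_root_of_unity w m :
  Cpow w m = RtoC 1 -> w <> RtoC 1 -> csum (fun l => Cpow w l) m = RtoC 0.
Proof.
  intros Hwm Hw1.
  assert (Hd : Cminus w (RtoC 1) <> RtoC 0).
  { intros E. apply Hw1.
    replace w with (Cplus (Cminus w (RtoC 1)) (RtoC 1)) by ring. rewrite E. ring. }
  pose proof (csum_geometric w m) as Hg. rewrite Hwm in Hg.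
  transitivity (Cmult (Cinv (Cminus w (RtoC 1)))
                       (Cmult (Cminus w (RtoC 1)) (csum (fun l => Cpow w l) m))).
  - field. exact Hd.
  - rewrite Hg. ring.
Qed.

Lemma csum_ket f m i :
  csum (fun n => Cmult (f n) (ket n i)) m = if (i <? m)%nat then f i else RtoC 0.
Proof.
  induction m as [|m IH]; simpl.
  - destruct (Nat.ltb_spec i 0); [lia | reflexivity].
  - rewrite IH. unfold ket.
    destruct (Nat.ltb_spec i m), (Nat.eqb_spec i m), (Nat.ltb_spec i (S m));
      try lia; subst; ring.
Qed.

Lemma csum_ket_stride f M k j a b : (b < k)%nat -> (j < k)%nat ->
  csum (fun n => Cmult (f n) (ket (n * k + j) (k * a + b))) M =
  if andb (b =? j)%nat (a <? M)%nat then f a else RtoC 0.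
Proof.
  intros Hb Hj.
  assert (Hdigits : forall m, (k * a + b = m * k + j)%nat -> a = m /\ b = j).
  { intros m E. assert (a = m) by (destruct (Nat.lt_total a m) as [h|[h|h]]; nia).
    split; nia. }
  induction M as [|M IH]; simpl.
  - rewrite Bool.andb_false_r. reflexivity.
  - rewrite IH. unfold ket.
    destruct (Nat.eqb_spec (k * a + b) (M * k + j)) as [E|E].
    + destruct (Hdigits M E) as [-> ->].
      rewrite Nat.eqb_refl, Nat.ltb_irrefl.
      replace (M <? S M)%nat with true by (symmetry; apply Nat.ltb_lt; lia).
      simpl. ring.
    + destruct (Nat.eqb_spec b j), (Nat.ltb_spec a M), (Nat.ltb_spec a (S M));
        simpl; try ring; try lia.
      assert (a = M) by lia. subst. lia.
Qed.

Lemma cexpi_add a b : Cmult (cexpi a) (cexpi b) = cexpi (a + b).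
Proof.
  unfold cexpi. rewrite cos_plus, sin_plus.
  apply injective_projections; simpl; ring.
Qed.

Lemma cexpi_0 : cexpi 0 = RtoC 1.
Proof. unfold cexpi. rewrite cos_0, sin_0. reflexivity. Qed.

Lemma cexpi_pow t n : Cpow (cexpi t) n = cexpi (INR n * t).
Proof.
  induction n as [|n IH]; simpl Cpow.
  - rewrite Rmult_0_l, cexpi_0. reflexivity.
  - rewrite IH, cexpi_add, S_INR. f_equal. ring.
Qed.

Lemma cexpi_add_2PI_mult x n : cexpi (x + 2 * PI * INR n) = cexpi x.
Proof.
  unfold cexpi. replace (2 * PI * INR n) with (2 * INR n * PI) by ring.
  rewrite cos_period, sin_period. reflexivity.
Qed.

Lemma Cmod_cexpi t : Cmod (cexpi t) = 1.
Proof.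
  unfold Cmod, cexpi; simpl.
  pose proof (sin2_cos2 t) as H. unfold Rsqr in H.
  replace (cos t * (cos t * 1) + sin t * (sin t * 1)) with 1 by lra.
  apply sqrt_1.
Qed.

Lemma cexpi_neq_1 x : 0 < Rabs x < 2 * PI -> cexpi x <> RtoC 1.
Proof.
  intros Hx E. unfold cexpi, RtoC in E. injection E as Hcos Hsin.
  destruct (sin_eq_0_0 x Hsin) as [m ->].
  pose proof PI_RGT_0.
  rewrite Rabs_mult, (Rabs_pos_eq PI) in Hx by lra.
  assert (Hm : 0 < Rabs (IZR m) < 2) by (split; nra).
  rewrite <- abs_IZR in Hm. destruct Hm as [Hm0 Hm2].
  apply lt_IZR in Hm0. apply lt_IZR in Hm2.
  assert (m = 1%Z \/ m = (-1)%Z) as [-> | ->] by lia.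
  - rewrite Rmult_1_l, cos_PI in Hcos. lra.
  - replace (IZR (-1) * PI) with (- PI) in Hcos by (simpl; ring).
    rewrite cos_neg, cos_PI in Hcos. lra.
Qed.

Lemma roots_of_unity_filter k j n : (0 < k)%nat -> (j < k)%nat ->
  csum (fun l => Cmult (cexpi (- (2 * PI * INR j * INR l / INR k)))
                       (Cpow (cexpi (2 * PI * INR l / INR k)) n)) k
  = if (n mod k =? j)%nat then RtoC (INR k) else RtoC 0.
Proof.
  intros Hk Hj.
  assert (HkR : 0 < INR k) by (apply lt_0_INR; exact Hk).
  set (b := (n mod k)%nat).
  assert (Hb : (b < k)%nat) by (apply Nat.mod_upper_bound; lia).
  assert (Hn : INR n = INR k * INR (n / k) + INR b).
  { rewrite <- mult_INR, <- plus_INR. f_equal. apply Nat.div_mod_eq. }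
  set (w := cexpi (2 * PI * (INR b - INR j) / INR k)).
  (* each term is [w^l], up to the full turns [2 pi l (n / k)] *)
  rewrite (csum_ext _ (fun l => Cpow w l)).
  2:{ intros l _. unfold w. rewrite !cexpi_pow, cexpi_add.
      rewrite <- (cexpi_add_2PI_mult (INR l * _) (l * (n / k))).
      f_equal. rewrite mult_INR, Hn. field. lra. }
  destruct (Nat.eqb_spec b j) as [<- | Hbj].
  - unfold w. replace (2 * PI * (INR b - INR b) / INR k) with 0 by (field; lra).
    rewrite cexpi_0, (csum_ext _ (fun _ => RtoC 1)) by (intros; apply Cpow_1_l).
    rewrite csum_const. ring.
  - apply csum_pow_root_of_unity.
    + unfold w. rewrite cexpi_pow.
      replace (INR k * (2 * PI * (INR b - INR j) / INR k))
        with (- (2 * PI * INR j) + 2 * PI * INR b) by (field; lra).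
      rewrite cexpi_add_2PI_mult, <- cexpi_0, <- (cexpi_add_2PI_mult _ j).
      f_equal. ring.
    + apply cexpi_neq_1.
      assert (Hbj' : INR b <> INR j) by (intros E; apply Hbj, INR_eq, E).
      assert (HbR : INR b < INR k) by (apply lt_INR, Hb).
      assert (HjR : INR j < INR k) by (apply lt_INR, Hj).
      pose proof (pos_INR b). pose proof (pos_INR j). pose proof PI_RGT_0.
      set (t := (INR b - INR j) / INR k).
      assert (Ht : t * INR k = INR b - INR j) by (unfold t; field; lra).
      replace (2 * PI * (INR b - INR j) / INR k) with (2 * PI * t) by (unfold t; field; lra).
      assert (-1 < t < 1) by (split; nra).
      assert (t <> 0) by (intros E; rewrite E in Ht; lra).
      split; [apply Rabs_pos_lt; nra | apply Rabs_def1; nra].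
Qed.

Lemma rsum_nonneg f m : (forall n, 0 <= f n) -> 0 <= rsum f m.
Proof.
  intros Hf. induction m as [|m IH]; simpl; [lra|].
  specialize (Hf m). lra.
Qed.

Lemma rsum_ge_term f m n : (forall i, 0 <= f i) -> (n < m)%nat -> f n <= rsum f m.
Proof.
  intros Hf. induction m as [|m IH]; intros Hn; [lia|]. simpl.
  destruct (Nat.eq_dec n m) as [->|Hnm].
  - pose proof (rsum_nonneg f m Hf). lra.
  - specialize (Hf m). pose proof (IH ltac:(lia)). lra.
Qed.

Lemma rprod_const_1 m : rprod (fun _ => 1) m = 1.
Proof. induction m as [|m IH]; simpl; [reflexivity|]. rewrite IH. ring. Qed.

Lemma coef_0 p q alpha beta : coef p q alpha beta 0 = 1.
Proof. unfold coef. cbn [poch]. rewrite !rprod_const_1. simpl. field. Qed.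

Lemma Nnorm_pos p q alpha beta N r : 0 < Nnorm p q alpha beta N r.
Proof.
  unfold Nnorm.
  set (f := fun n => Rabs (coef p q alpha beta n) * r ^ (2 * n)).
  assert (Hf : forall n, 0 <= f n).
  { intros n. unfold f. rewrite pow_sqr. apply Rmult_le_pos.
    - apply Rabs_pos.
    - apply pow_le, Rle_0_sqr. }
  apply Rlt_le_trans with (f 0%nat); [|apply rsum_ge_term; [exact Hf | lia]].
  unfold f. rewrite coef_0, Rabs_R1. simpl. lra.
Qed.

Lemma Fkj_nonneg p q alpha beta N k j r :
  0 <= r -> 0 <= Fkj p q alpha beta N k j r.
Proof.
  intros Hr. apply rsum_nonneg. intros n.
  apply Rmult_le_pos; [apply Rabs_pos | apply pow_le, Hr].
Qed.

Lemma Cmod_mult_cexpi z t : Cmod (Cmult z (cexpi t)) = Cmod z.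
Proof. rewrite Cmod_mult, Cmod_cexpi. ring. Qed.

Lemma hcs_component p q alpha beta N s w i :
  hcs p q alpha beta N s w i =
  Cmult (RtoC (/ sqrt (Nnorm p q alpha beta N (Cmod w))))
        (if (i <? N + 1)%nat then Cmult (s i) (Cpow w i) else RtoC 0).
Proof. unfold hcs, vscale, vsum. rewrite csum_ket. reflexivity. Qed.

Lemma hypercat_component p q alpha beta N s k j z a b :
  (b < k)%nat -> (j < k)%nat ->
  hypercat p q alpha beta N s k j z (k * a + b) =
  Cmult (RtoC (/ sqrt (Fkj p q alpha beta N k j (Cmod z))))
        (if andb (b =? j)%nat (a <? (N + 1) / k)%nat
         then Cmult (s (k * a + b)%nat) (Cpow z (k * a + b)) else RtoC 0).
Proof.
  intros Hb Hj. unfold hypercat, vscale, vsum.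
  rewrite (csum_ket_stride (fun n => Cmult (s (n * k + j)%nat) (Cpow z (n * k + j))))
    by assumption.
  destruct (Nat.eqb_spec b j) as [<-|]; simpl; [|reflexivity].
  replace (a * k + b)%nat with (k * a + b)%nat by lia. reflexivity.
Qed.

Lemma rotated_hcs_sum_component p q alpha beta N s k j z i :
  (0 < k)%nat -> (j < k)%nat ->
  csum (fun l => Cmult (cexpi (- (2 * PI * INR j * INR l / INR k)))
                       (hcs p q alpha beta N s (Cmult z (cexpi (2 * PI * INR l / INR k))) i)) k
  = Cmult (RtoC (/ sqrt (Nnorm p q alpha beta N (Cmod z))))
          (if andb (i <? N + 1)%nat (i mod k =? j)%nat
           then Cmult (RtoC (INR k)) (Cmult (s i) (Cpow z i)) else RtoC 0).
Proof.
  intros Hk Hj.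
  set (c := RtoC (/ sqrt (Nnorm p q alpha beta N (Cmod z)))).
  destruct (Nat.ltb_spec i (N + 1)); simpl.
  - rewrite (csum_ext _ (fun l => Cmult (Cmult c (Cmult (s i) (Cpow z i)))
        (Cmult (cexpi (- (2 * PI * INR j * INR l / INR k)))
               (Cpow (cexpi (2 * PI * INR l / INR k)) i)))).
    2:{ intros l _. rewrite hcs_component, Cmod_mult_cexpi, Cpow_mult_l.
        destruct (Nat.ltb_spec i (N + 1)); [|lia]. fold c. ring. }
    rewrite csum_mult_l, roots_of_unity_filter by assumption.
    destruct (i mod k =? j)%nat; ring.
  - rewrite (csum_ext _ (fun _ => RtoC 0)), csum_const; [ring|].
    intros l _. rewrite hcs_component.
    destruct (Nat.ltb_spec i (N + 1)); [lia|]. ring.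
Qed.

Theorem proposition4
  (p q : nat) (alpha beta : nat -> R) (N : nat)
  (Hbeta0 : forall j, (j < q)%nat -> beta j <> 0)
  (Hbneg : exists j, (j < q)%nat /\ neg_int (beta j))
  (HNattained : (exists i, (i < p)%nat /\ alpha i = - INR N) \/
                (exists j, (j < q)%nat /\ beta j = - INR N))
  (HNmax : (forall i, (i < p)%nat -> forall m : nat,
               neg_int (alpha i) -> alpha i = - INR m -> (m <= N)%nat) /\
           (forall j, (j < q)%nat -> forall m : nat,
               neg_int (beta j) -> beta j = - INR m -> (m <= N)%nat))
  (Hwd : forall n, (n <= N)%nat -> rprod (fun j => poch (beta j) n) q <> 0)
  (s : nat -> C)
  (Hs : forall n, (n <= N)%nat -> Cmult (s n) (s n) = RtoC (coef p q alpha beta n))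
  (k : nat) (Hk : (1 <= k)%nat) (Hdiv : Nat.divide k (N + 1))
  (z : C) (Hz : z <> RtoC 0) :
  forall j : nat, (j < k)%nat ->
    Fkj p q alpha beta N k j (Cmod z) <> 0 ->
    hypercat p q alpha beta N s k j z =
    vscale (Cmult (RtoC (/ INR k))
                  (RtoC (sqrt (Nnorm p q alpha beta N (Cmod z)
                               / Fkj p q alpha beta N k j (Cmod z)))))
      (vsum (fun l => vscale (cexpi (- (2 * PI * INR j * INR l / INR k)))
                        (hcs p q alpha beta N s
                           (Cmult z (cexpi (2 * PI * INR l / INR k))))) k).
Proof.
  intros j Hj HF0.
  set (F := Fkj p q alpha beta N k j (Cmod z)) in *.
  set (Nz := Nnorm p q alpha beta N (Cmod z)).
  assert (HF : 0 < F).
  { pose proof (Fkj_nonneg p q alpha beta N k j _ (Cmod_ge_0 z)). unfold F in *. lra. }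
  assert (HN : 0 < Nz) by apply Nnorm_pos.
  assert (HkR : 0 < INR k) by (apply lt_0_INR; lia).
  assert (Hscal : / INR k * sqrt (Nz / F) * (/ sqrt Nz * INR k) = / sqrt F).
  { rewrite sqrt_div_alt by exact HF.
    pose proof (sqrt_lt_R0 _ HN). pose proof (sqrt_lt_R0 _ HF). field. lra. }
  destruct Hdiv as [M HM].
  apply functional_extensionality. intros i.
  rewrite (Nat.div_mod_eq i k). set (a := (i / k)%nat). set (b := (i mod k)%nat).
  assert (Hb : (b < k)%nat) by (apply Nat.mod_upper_bound; lia).
  rewrite hypercat_component by lia. unfold vscale, vsum.
  rewrite rotated_hcs_sum_component by lia. fold F Nz.
  assert (Hmod : ((k * a + b) mod k = b)%nat).
  { rewrite Nat.mul_comm, Nat.add_comm, Nat.Div0.mod_add. apply Nat.mod_small, Hb. }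
  rewrite Hmod, HM, Nat.div_mul by lia.
  destruct (Nat.eqb_spec b j) as [<-|]; simpl;
    rewrite ?Bool.andb_true_r, ?Bool.andb_false_r; [|ring].
  destruct (Nat.ltb_spec a M), (Nat.ltb_spec (k * a + b) (M * k)); try nia; [|ring].
  rewrite <- Hscal, !RtoC_mult. ring.
Qed.
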